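(* If a $3$-connected graph has a mixed bicycle, then it is $K_{2,3}$-based.
   Context: A mixed bicycle in a graph is a pair $(Q_o,Q_e)$ of vertex-disjoint cycles where $Q_o$ has odd length and $Q_e$ has even length at least four. To bisubdivide an edge is to subdivide it by inserting an even number of new vertices; a bisubdivision of $K$ is obtained by bisubdividing some (possibly none) of its edges. A graph is $K_{2,3}$-based if it contains a subgraph that is a bisubdivision of $K_{2,3}$. *)

(* Finite simple graphs as a symmetric irreflexive relation
   e : rel T on a finType T. *)
From mathcomp Require Import all_boot.
Set Implicit Arguments. Unset Strict Implicit. Unset Printing Implicit Defensive.

Section Graphs.
Variables (T : finType) (e : rel T).

Definition is_graph_cycle (c : seq T) : bool :=
  [&& 3 <= size c, uniq c & cycle e c].

Definition mixed_bicycle (Qo Qe : seq T) : Prop :=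
  [/\ is_graph_cycle Qo, is_graph_cycle Qe, odd (size Qo),
      ~~ odd (size Qe) /\ 4 <= size Qe & [disjoint Qo & Qe]].

Definition has_mixed_bicycle : Prop := exists Qo Qe, mixed_bicycle Qo Qe.

Definition del_rel (S : {set T}) : rel T :=
  [rel x y | [&& e x y, x \notin S & y \notin S]].

Definition k_connected (k : nat) : Prop :=
  k < #|T| /\
  forall S : {set T}, #|S| < k ->
    forall x y, x \notin S -> y \notin S -> connect (del_rel S) x y.

(* A path x :: p (as a vertex sequence) from x to y with no repeated
   vertices; its number of edges is [size p]. *)
Definition is_xy_path (x y : T) (p : seq T) : bool :=
  [&& path e x p, last x p == y & uniq (x :: p)].

(* Interior vertices of the path x :: p (all but first and last). *)
Definition interior (p : seq T) : seq T := take (size p).-1 p.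

(* The graph contains a subgraph which is a bisubdivision of K_{2,3}:
   branch vertices a 0, a 1 (one side) and b 0, b 1, b 2 (other side),
   all distinct, and for each pair (i,j) a path P i j from a i to b j with an
   odd number of edges (i.e. an even number of subdividing vertices), the
   paths being internally vertex-disjoint and their interiors avoiding all
   branch vertices. *)
Definition K23_based : Prop :=
  exists (a : 'I_2 -> T) (b : 'I_3 -> T) (P : 'I_2 -> 'I_3 -> seq T),
  [/\ injective a /\ injective b, (forall i j, a i != b j),
      (forall i j, is_xy_path (a i) (b j) (P i j) /\ odd (size (P i j))),
      (forall i j, (forall k, a k \notin interior (P i j)) /\ (forall l, b l \notin interior (P i j)))
    & (forall i j i' j', (i, j) != (i', j') ->
          [disjoint interior (P i j) & interior (P i' j')])].

End Graphs.

From mathcomp Require Import all_boot zify.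
From Stdlib Require Import Classical.
Set Implicit Arguments. Unset Strict Implicit. Unset Printing Implicit Defensive.

(* By 3-connectivity and Menger's theorem there are three disjoint paths from the
   odd cycle Qo to the even cycle Qe, each meeting Qo only in its first vertex and
   Qe only in its last.  Two of their ends x1, x2 on Qe sit at positions of the same
   parity, so they cut Qe into two arcs of even length.  Their starts y1, y2 cut the
   odd cycle Qo into two arcs of different parities; one of them closes the two paths
   into a third x1-x2 path of even length, internally disjoint from Qe.  Three
   internally disjoint x1-x2 paths of even length form a bisubdivision of K_{2,3}:
   the branch vertices are x1, x2 and the second vertex of each path. *)

Section PathFacts.
Variable T : eqType.
Implicit Types (r : rel T) (P Q X : pred T).

Lemma path_all_fwd r P Q z p :
  path r z p -> all P (z :: p) -> Q z ->
  (forall u v, r u v -> P u -> P v -> Q u -> Q v) -> all Q (z :: p).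
Proof.
elim: p z => [|v p IHp] z /=; first by move=> _ _ ->.
move=> /andP[rzv pv] /and3P[Pz Pv Pp] Qz step.
have Qv := step z v rzv Pz Pv Qz.
by rewrite Qz; apply: IHp => //=; rewrite Pv.
Qed.

Lemma path_all_bwd r P Q z p :
  path r z p -> all P (z :: p) -> Q (last z p) ->
  (forall u v, r u v -> P u -> P v -> Q v -> Q u) -> all Q (z :: p).
Proof.
elim: p z => [|v p IHp] z /=; first by move=> _ _ ->.
move=> /andP[rzv pv] /and3P[Pz Pv Pp] Ql step.
have /andP[Qv Qp] : all Q (v :: p) by apply: IHp; rewrite //= Pv.
by rewrite (step z v) //= Qv.
Qed.

Lemma path_split_first r X z p : path r z p -> has X (z :: p) ->
  exists q q', [/\ p = q ++ q', path r z q, X (last z q) & ~~ has X (belast z q)].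
Proof.
elim: p z => [|v p IHp] z /=.
  by move=> _; rewrite orbF => Xz; exists [::], [::].
move=> /andP[rzv pv]; case Xz: (X z) => /= Xp; first by exists [::], (v :: p).
have [q [q' [-> pq Xq nXq]]] := IHp v pv Xp.
by exists (v :: q), q'; rewrite /= rzv pq Xq Xz.
Qed.

Lemma path_split_last r X z p : path r z p -> has X (z :: p) ->
  exists s z' q, [/\ z :: p = s ++ z' :: q, path r z' q,
                     last z' q = last z p, X z' & ~~ has X q].
Proof.
elim: p z => [|v p IHp] z /=.
  by move=> _; rewrite orbF => Xz; exists [::], z, [::].
move=> /andP[rzv pv]; case Xp: (has X (v :: p)) => /= Xz.
  have [s [z' [q [Ep pq lq Xz' nXq]]]] := IHp v pv Xp.
  by exists (z :: s), z', q; rewrite Ep.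
by exists [::], z, (v :: p); rewrite /= rzv pv Xp orbF in Xz *.
Qed.

End PathFacts.

Section FlattenMap.
Variables (I T : eqType) (vs : I -> seq T).
Implicit Types (L : seq I).

Lemma uniq_flatten_map_uniq L i :
  uniq (flatten (map vs L)) -> i \in L -> uniq (vs i).
Proof.
elim: L => [|j L IHL] //=; rewrite cat_uniq => /and3P[uj _ uL].
by rewrite inE => /predU1P[->|/IHL->].
Qed.

Lemma uniq_flatten_map_inj L i j z :
  uniq (flatten (map vs L)) -> i \in L -> j \in L -> z \in vs i -> z \in vs j ->
  i = j.
Proof.
elim: L => [|l L IHL] //=; rewrite cat_uniq => /and3P[_ disj uL].
have notin_l w m : m \in L -> w \in vs l -> w \in vs m -> False.
  by move=> mL wl wm; case/hasP: disj; exists w => //; apply/flatten_mapP; exists m.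
rewrite !inE => /predU1P[->|iL] /predU1P[->|jL] zi zj //.
- by case: (notin_l z j).
- by case: (notin_l z i).
- exact: IHL.
Qed.

Lemma uniq_flatten_mapI L :
  uniq L -> (forall i, i \in L -> uniq (vs i)) ->
  (forall i j z, i \in L -> j \in L -> z \in vs i -> z \in vs j -> i = j) ->
  uniq (flatten (map vs L)).
Proof.
elim: L => [|l L IHL] //= /andP[lL uL] uvs inj.
have uvsL i : i \in L -> uniq (vs i) by move=> iL; apply: uvs; rewrite inE iL orbT.
have injL i j z : i \in L -> j \in L -> z \in vs i -> z \in vs j -> i = j.
  by move=> iL jL; apply: inj; rewrite inE ?iL ?jL orbT.
rewrite cat_uniq uvs ?mem_head // IHL // andbT; apply/hasP => -[z /flatten_mapP[j jL zj] zl].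
by move: lL; rewrite (inj l j z) ?inE ?eqxx ?jL ?orbT.
Qed.

Lemma uniq_flatten_map_sel (g : I -> T) L :
  (forall i, g i \in vs i) -> uniq (flatten (map vs L)) -> uniq (map g L).
Proof.
move=> gvs; elim: L => [|i L IHL] //=; rewrite cat_uniq => /and3P[_ disj uL].
rewrite IHL // andbT; apply/mapP => -[j jL gij].
by case/hasP: disj; exists (g i) => //; apply/flatten_mapP; exists j; rewrite ?gij.
Qed.

Lemma shrink_flatten_map (Q : I -> Prop) L :
  (forall i, i \in L -> exists j, Q j /\ subseq (vs j) (vs i)) ->
  exists L', [/\ size L' = size L, forall j, j \in L' -> Q j &
                 subseq (flatten (map vs L')) (flatten (map vs L))].
Proof.
elim: L => [|i L IHL] shrink; first by exists [::].
have [|L' [sizeL' QL' subL']] := IHL.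
  by move=> j jL; apply: shrink; rewrite inE jL orbT.
have [j [Qj subj]] := shrink i (mem_head _ _).
exists (j :: L'); split => /=; first by rewrite sizeL'.
  by move=> l; rewrite inE => /predU1P[->|/QL'].
exact: cat_subseq.
Qed.

Lemma nth_index_map (f : I -> T) L i0 t : t \in map f L ->
  nth i0 L (index t (map f L)) \in L /\ f (nth i0 L (index t (map f L))) = t.
Proof.
move=> tfL; have ltL : index t (map f L) < size L by rewrite -(size_map f) index_mem.
by rewrite mem_nth // -(nth_map i0 t) // nth_index.
Qed.

End FlattenMap.

(** * Menger's theorem *)

Section Menger.
Variable T : finType.
Implicit Types (e : rel T) (A B S W : {set T}) (P : T * seq T) (Ps : seq (T * seq T)).

(* A path x0 x1 ... xn is encoded as the pair (x0, [:: x1; ...; xn]). *)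
Definition verts P := P.1 :: P.2.
Definition pend P := last P.1 P.2.
Definition disjoint_paths Ps := uniq (flatten (map verts Ps)).

Definition separates e A B S :=
  forall x p, path e x p -> x \in A -> last x p \in B -> has (mem S) (x :: p).

Definition AB_path e A B P := [&& path e P.1 P.2, P.1 \in A & pend P \in B].

Definition linkage e A B k Ps :=
  [/\ size Ps = k, all (AB_path e A B) Ps & disjoint_paths Ps].

Definition tight_path e A B P :=
  [&& AB_path e A B P, ~~ has (mem A) P.2 & ~~ has (mem B) (belast P.1 P.2)].

Definition del_edge e x y : rel T := [rel u v | e u v && ((u, v) != (x, y))].

Lemma del_rel_path e S x p : x \notin S ->
  path (del_rel e S) x p = path e x p && ~~ has (mem S) p.
Proof.
elim: p x => [|y p IHp] x xS //=.
rewrite /del_rel /= xS /=; case: (boolP (y \in S)) => yS /=; first by rewrite !andbF.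
by rewrite IHp // andbT andbA.
Qed.

Lemma del_edge_sub e x y : subrel (del_edge e x y) e.
Proof. by move=> u v /andP[]. Qed.

Lemma del_edge_path_belast e x y z p :
  path e z p -> x \notin belast z p -> path (del_edge e x y) z p.
Proof.
elim: p z => [|v p IHp] z //= /andP[ezv pv]; rewrite inE negb_or => /andP[zx xp].
by rewrite /del_edge /= ezv IHp // andbT; apply: contraNneq zx => -[-> _].
Qed.

Lemma del_edge_path_behead e x y z p :
  path e z p -> y \notin p -> path (del_edge e x y) z p.
Proof.
elim: p z => [|v p IHp] z //= /andP[ezv pv]; rewrite inE negb_or => /andP[vy yp].
by rewrite /del_edge /= ezv IHp // andbT; apply: contraNneq vy => -[_ ->].
Qed.

Lemma tight_pathP e A B P : tight_path e A B P ->
  [/\ path e P.1 P.2, P.1 \in A, pend P \in B, ~~ has (mem A) P.2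
     & ~~ has (mem B) (belast P.1 P.2)].
Proof. by case/and3P => /and3P[]. Qed.

Lemma uniq_card_cover (s : seq T) W :
  uniq s -> {subset s <= W} -> #|W| <= size s -> {subset W <= s}.
Proof.
move=> us sW leW; have sWs : s \subset W by apply/subsetP.
have eqsW : #|s| = #|W|.
  by apply/eqP; rewrite eqn_leq subset_leq_card // (card_uniqP us).
by move=> z; rewrite (elimT (subset_cardP eqsW) sWs).
Qed.

Lemma tight_linkage e A B k Ps : linkage e A B k Ps ->
  exists Ps', [/\ size Ps' = k, all (tight_path e A B) Ps' & disjoint_paths Ps'].
Proof.
move=> [<- /allP ABPs disjPs].
have [|Ps' [sizePs' tightPs' subPs']] :=
  shrink_flatten_map (vs := verts) (Q := fun P => tight_path e A B P) (L := Ps).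
  move=> [a p] /ABPs /and3P[/= pp aA pB].
  have hasA : has (mem A) (a :: p) by apply/hasP; exists a; rewrite ?mem_head.
  have [s [z [q [Ep pq lq zA nAq]]]] := path_split_last pp hasA.
  have hasB : has (mem B) (z :: q) by apply/hasP; exists (last z q); rewrite ?mem_last ?lq.
  have [q1 [q2 [Eq pq1 q1B nBq1]]] := path_split_first pq hasB.
  exists (z, q1); split.
    move: nAq; rewrite Eq has_cat negb_or => /andP[nAq1 _].
    by apply/and3P; split => //; apply/and3P.
  change (subseq (z :: q1) (a :: p)); rewrite Ep Eq -cat_cons.
  exact: subseq_trans (prefix_subseq _ q2) (suffix_subseq s _).
by exists Ps'; split; [| apply/allP | apply: subseq_uniq subPs' disjPs].
Qed.

(* Induction step, by deletion of the edge xy: e' has an A-B separator S with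
   #|S| < k, so x |: S and y |: S separate A from B in e and have exactly k
   elements.  Take k disjoint A-(x |: S) paths and k disjoint (y |: S)-B paths
   of e'.  All but the last vertex of the former are reachable from A in e' - S,
   all but the first vertex of the latter co-reachable from B; so the two families
   meet only in S, and glue, through the edge xy, into k disjoint A-B paths. *)
Section MengerStep.
Variables (e : rel T) (x y : T) (A B S : {set T}) (k : nat).
Local Notation e' := (del_edge e x y).
Hypothesis exy : e x y.
Hypothesis menger_e' : forall A B : {set T},
  (forall S, separates e' A B S -> k <= #|S|) -> exists Ps, linkage e' A B k Ps.
Hypothesis sep_e : forall S, separates e A B S -> k <= #|S|.
Hypothesis sepS : separates e' A B S.
Hypothesis smallS : #|S| < k.

Definition reachA z :=
  [exists a in A, [&& a \notin S, z \notin S & connect (del_rel e' S) a z]].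
Definition coreachB z :=
  [exists b in B, [&& b \notin S, z \notin S & connect (del_rel e' S) z b]].

Lemma reachA_notin z : reachA z -> z \notin S.
Proof. by case/exists_inP => a _ /and3P[]. Qed.

Lemma coreachB_notin z : coreachB z -> z \notin S.
Proof. by case/exists_inP => b _ /and3P[]. Qed.

Lemma reachA_coreachB z : reachA z -> coreachB z -> False.
Proof.
case/exists_inP => a aA /and3P[aS _ caz]; case/exists_inP => b bB /and3P[_ _ czb].
have /connectP[p + lp] := connect_trans caz czb.
rewrite del_rel_path // => /andP[pp nSp].
by move: (sepS pp aA); rewrite -lp bB /= (negbTE aS) (negbTE nSp) => /(_ isT).
Qed.

Lemma reachA_A a : a \in A -> a \notin S -> reachA a.
Proof. by move=> aA aS; apply/exists_inP; exists a; rewrite ?aS ?connect0. Qed.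

Lemma coreachB_B b : b \in B -> b \notin S -> coreachB b.
Proof. by move=> bB bS; apply/exists_inP; exists b; rewrite ?bS ?connect0. Qed.

Lemma reachA_step u v : reachA u -> e' u v -> v \notin S -> reachA v.
Proof.
case/exists_inP => a aA /and3P[aS uS cau] e'uv vS; apply/exists_inP; exists a => //.
by rewrite aS vS (connect_trans cau) // connect1 //= /del_rel /= e'uv uS.
Qed.

Lemma coreachB_step u v : coreachB v -> e' u v -> u \notin S -> coreachB u.
Proof.
case/exists_inP => b bB /and3P[bS vS cvb] e'uv uS; apply/exists_inP; exists b => //.
by rewrite bS uS (connect_trans _ cvb) // connect1 //= /del_rel /= e'uv uS.
Qed.

Lemma separates_fwd W : S \subset W ->
  (forall u v, e u v -> u \notin W -> v \notin W -> reachA u -> e' u v) ->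
  separates e A B W.
Proof.
move=> sSW e'_fwd z p pp zA lB; apply/negPn/negP => nWp.
have avoidW : all [predC W] (z :: p) by rewrite all_predC.
have notS u : u \notin W -> u \notin S by apply: contra; apply: (subsetP sSW).
have zS : z \notin S by apply/notS; case/andP: avoidW.
have /allP reach := path_all_fwd pp avoidW (reachA_A zA zS)
  (fun u v euv uW vW Ru => reachA_step Ru (e'_fwd u v euv uW vW Ru) (notS v vW)).
apply: (@reachA_coreachB (last z p)); first exact/reach/mem_last.
by apply: coreachB_B lB (notS _ _); apply: (allP avoidW); apply: mem_last.
Qed.

Lemma separates_bwd W : S \subset W ->
  (forall u v, e u v -> u \notin W -> v \notin W -> coreachB v -> e' u v) ->
  separates e A B W.
Proof.
move=> sSW e'_bwd z p pp zA lB; apply/negPn/negP => nWp.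
have avoidW : all [predC W] (z :: p) by rewrite all_predC.
have notS u : u \notin W -> u \notin S by apply: contra; apply: (subsetP sSW).
have lS : last z p \notin S by apply/notS; apply: (allP avoidW); apply: mem_last.
have /allP coreach := path_all_bwd pp avoidW (coreachB_B lB lS)
  (fun u v euv uW vW Rv => coreachB_step Rv (e'_bwd u v euv uW vW Rv) (notS u uW)).
apply: (@reachA_coreachB z); last exact/coreach/mem_head.
by apply: reachA_A zA (notS _ _); case/andP: avoidW.
Qed.

Lemma reachA_x : reachA x.
Proof.
apply: contraT => nRx; suff /sep_e : separates e A B S by rewrite leqNgt smallS.
apply: separates_fwd (subxx S) _ => u v euv _ _ Ru.
by rewrite /del_edge /= euv; apply: contraNneq nRx => -[<- _].
Qed.

Lemma coreachB_y : coreachB y.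
Proof.
apply: contraT => nRy; suff /sep_e : separates e A B S by rewrite leqNgt smallS.
apply: separates_bwd (subxx S) _ => u v euv _ _ Rv.
by rewrite /del_edge /= euv; apply: contraNneq nRy => -[_ <-].
Qed.

Lemma x_notin_S : x \notin S. Proof. exact: reachA_notin reachA_x. Qed.
Lemma y_notin_S : y \notin S. Proof. exact: coreachB_notin coreachB_y. Qed.

Lemma separates_Sx : separates e A B (x |: S).
Proof.
apply: separates_fwd; first exact: subsetUr.
move=> u v euv; rewrite in_setU1 negb_or => /andP[ux _] _ _.
by rewrite /del_edge /= euv; apply: contraNneq ux => -[-> _].
Qed.

Lemma separates_Sy : separates e A B (y |: S).
Proof.
apply: separates_bwd; first exact: subsetUr.
move=> u v euv _; rewrite in_setU1 negb_or => /andP[vy _] _.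
by rewrite /del_edge /= euv; apply: contraNneq vy => -[_ ->].
Qed.

Lemma card_setU1_separator z : z \notin S -> separates e A B (z |: S) -> #|z |: S| = k.
Proof.
move=> zS /sep_e sepk; apply/eqP; rewrite eqn_leq sepk andbT.
by rewrite cardsU1 zS add1n.
Qed.

Lemma linkage_to_Sx : exists Ps, linkage e' A (x |: S) k Ps.
Proof.
apply: menger_e' => W sepW; apply: sep_e => z p pp zA lB.
have [q [q' [-> pq lq nSq]]] := path_split_first pp (separates_Sx pp zA lB).
have pq' : path e' z q.
  apply: (del_edge_path_belast y pq); apply: contra _ nSq => xq.
  by apply/hasP; exists x => //; exact: setU11.
by move: (sepW _ _ pq' zA lq); rewrite -cat_cons has_cat => ->.
Qed.

Lemma linkage_from_Sy : exists Qs, linkage e' (y |: S) B k Qs.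
Proof.
apply: menger_e' => W sepW; apply: sep_e => z p pp zA lB.
have [s [z' [q [-> pq lq z'S nSq]]]] := path_split_last pp (separates_Sy pp zA lB).
have pq' : path e' z' q.
  apply: (del_edge_path_behead x pq); apply: contra _ nSq => yq.
  by apply/hasP; exists y => //; exact: setU11.
by move: (sepW _ _ pq' z'S); rewrite lq => /(_ lB); rewrite has_cat orbC => ->.
Qed.

Section Glue.
Variables Ps Qs : seq (T * seq T).
Hypotheses (sizePs : size Ps = k) (tightPs : all (tight_path e' A (x |: S)) Ps)
  (disjPs : disjoint_paths Ps).
Hypotheses (sizeQs : size Qs = k) (tightQs : all (tight_path e' (y |: S) B) Qs)
  (disjQs : disjoint_paths Qs).

Lemma pend_cover s : s \in x |: S -> s \in map pend Ps.
Proof.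
apply: uniq_card_cover.
- by apply: uniq_flatten_map_sel disjPs => P; apply: mem_last.
- by move=> _ /mapP[P /(allP tightPs)/tight_pathP[_ _ PSx _ _] ->].
- by rewrite size_map sizePs (card_setU1_separator x_notin_S separates_Sx).
Qed.

Lemma head_cover s : s \in y |: S -> s \in map (fun Q => Q.1) Qs.
Proof.
apply: uniq_card_cover.
- by apply: uniq_flatten_map_sel disjQs => Q; apply: mem_head.
- by move=> _ /mapP[Q /(allP tightQs)/tight_pathP[_ QSy _ _ _] ->].
- by rewrite size_map sizeQs (card_setU1_separator y_notin_S separates_Sy).
Qed.

Definition path_to s := nth (s, [::]) Ps (index s (map pend Ps)).
Definition path_from s := nth (s, [::]) Qs (index s (map (fun Q => Q.1) Qs)).

Lemma path_toP s : s \in x |: S -> path_to s \in Ps /\ pend (path_to s) = s.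
Proof. by move/pend_cover; apply: nth_index_map. Qed.

Lemma path_fromP s : s \in y |: S -> path_from s \in Qs /\ (path_from s).1 = s.
Proof. by move/head_cover; apply: nth_index_map. Qed.

Lemma Ps_zone P z : P \in Ps -> z \in verts P -> z = pend P \/ reachA z.
Proof.
move=> PPs; have [pP PA _ _ nSx] := tight_pathP (allP tightPs P PPs).
case: P PPs pP PA nSx => a p _ /= pp aA nSx; rewrite /verts /pend /= lastI mem_rcons inE.
case/predU1P => [->|zb]; [by left | right].
have avoidS : all [predC S] (belast a p).
  by apply/allP => u ub; apply: contra nSx => uS; apply/hasP; exists u => //; apply: setU1r.
move: zb avoidS pp; case/lastP: p {nSx} => [|q l] //; rewrite belast_rcons rcons_path.
move=> zb avoidS /andP[pq _]; have aS : a \notin S by case/andP: avoidS.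
apply: (allP (path_all_fwd pq avoidS (reachA_A aA aS) _)) zb => u v e'uv _ vS Ru.
exact: reachA_step Ru e'uv vS.
Qed.

Lemma Qs_zone Q z : Q \in Qs -> z \in verts Q -> z = Q.1 \/ coreachB z.
Proof.
move=> QQs; have [pQ _ QB nSy _] := tight_pathP (allP tightQs Q QQs).
have avoidS : all [predC S] Q.2.
  by apply/allP => u uq; apply: contra nSy => uS; apply/hasP; exists u => //; apply: setU1r.
rewrite /verts inE => /predU1P[->|zq]; [by left | right].
case: Q QQs pQ QB nSy avoidS zq => a [|v q] //= _ /andP[_ pq] lB _ avoidS0 zq.
have avoidS : all [predC S] (v :: q) := avoidS0.
have lS : last v q \notin S by apply: (allP avoidS); apply: mem_last.
apply: (allP (path_all_bwd pq avoidS (coreachB_B lB lS) _)) zq => u w e'uw uS _ Rw.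
exact: coreachB_step Rw e'uw uS.
Qed.

Lemma Ps_Qs_meet P Q z : P \in Ps -> Q \in Qs -> z \in verts P -> z \in verts Q ->
  [/\ z = pend P, z = Q.1 & z \in S].
Proof.
move=> PPs QQs zP zQ.
have [_ _ PSx _ _] := tight_pathP (allP tightPs P PPs).
have [_ QSy _ _ _] := tight_pathP (allP tightQs Q QQs).
case: (Ps_zone PPs zP) => [zP1|Rz]; case: (Qs_zone QQs zQ) => [zQ1|Rz'].
- split=> //; move: PSx QSy; rewrite -zP1 -zQ1 !in_setU1.
  case/predU1P=> [zx|//]; case/predU1P=> [zy|//].
  by exfalso; apply: (reachA_coreachB reachA_x); rewrite -zx zy coreachB_y.
- move: PSx; rewrite -zP1 in_setU1 => /predU1P[zx|zS].
    by exfalso; apply: (@reachA_coreachB z _ Rz'); rewrite zx reachA_x.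
  by move: (coreachB_notin Rz'); rewrite zS.
- move: QSy; rewrite -zQ1 in_setU1 => /predU1P[zy|zS].
    by exfalso; apply: (reachA_coreachB Rz); rewrite zy coreachB_y.
  by move: (reachA_notin Rz); rewrite zS.
- by case: (reachA_coreachB Rz Rz').
Qed.

Definition glue_target s := if s == x then y else s.

Definition glued s :=
  ((path_to s).1,
   (path_to s).2 ++ (if s == x then verts (path_from y) else (path_from s).2)).

Lemma glue_target_in s : s \in x |: S -> glue_target s \in y |: S.
Proof.
rewrite /glue_target in_setU1; case: eqP => [_ _|_ /= sS]; first exact: setU11.
exact: setU1r.
Qed.

Lemma glue_target_inj : {in x |: S &, injective glue_target}.
Proof.
move=> s s'; rewrite /glue_target !in_setU1.
case: eqP => [->|_]; case: eqP => [->|_] //= sS s'S E.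
- by move: y_notin_S; rewrite E s'S.
- by move: y_notin_S; rewrite -E sS.
Qed.

Lemma mem_glued s z : z \in verts (glued s) ->
  z \in verts (path_to s) \/ z \in verts (path_from (glue_target s)).
Proof.
rewrite /glued /glue_target /verts /= inE mem_cat.
case: (boolP (s == x)) => [/eqP->|_] /= /or3P[zP|zP|zQ];
  first [by left; rewrite inE zP ?orbT | by right; rewrite // inE zQ orbT].
Qed.

Lemma glued_AB_path s : s \in x |: S -> AB_path e A B (glued s).
Proof.
move=> sSx; have [PPs Pend] := path_toP sSx.
have [pP PA _ _ _] := tight_pathP (allP tightPs _ PPs).
have [QQs Qhead] := path_fromP (glue_target_in sSx).
have [pQ _ QB _ _] := tight_pathP (allP tightQs _ QQs).
have sube := @del_edge_sub e x y.
move: Pend Qhead pP PA pQ QB; rewrite /AB_path /glued /pend /glue_target /=.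
case: (boolP (s == x)) => [/eqP->|_] /= Pend Qhead pP PA pQ QB;
  rewrite cat_path last_cat Pend (sub_path sube pP) PA /=.
- by rewrite Qhead in pQ QB; rewrite Qhead exy (sub_path sube pQ).
- by rewrite Qhead in pQ QB; rewrite (sub_path sube pQ).
Qed.

Lemma glued_uniq s : s \in x |: S -> uniq (verts (glued s)).
Proof.
move=> sSx; have [PPs Pend] := path_toP sSx.
have [QQs Qhead] := path_fromP (glue_target_in sSx).
have uQ := uniq_flatten_map_uniq disjQs QQs.
have -> : verts (glued s) =
  verts (path_to s) ++ (if s == x then verts (path_from y) else (path_from s).2) by [].
rewrite cat_uniq (uniq_flatten_map_uniq disjPs PPs) /=.
move: QQs Qhead uQ; rewrite /glue_target.
case: (boolP (s == x)) => [/eqP sx|_] QQs Qhead uQ.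
  rewrite uQ andbT; apply/hasP => -[z zQ zP].
  have [zP1 _ zS] := Ps_Qs_meet PPs QQs zP zQ.
  by move: x_notin_S; rewrite -sx -Pend -zP1 zS.
move: uQ; rewrite /verts /= => /andP[nQ ->]; rewrite andbT.
apply/hasP => -[z zQ zP]; have zQ' : z \in verts (path_from s) by rewrite inE zQ orbT.
have [_ zQ1 _] := Ps_Qs_meet PPs QQs zP zQ'.
by move: nQ; rewrite -zQ1 zQ.
Qed.

Lemma glued_meet_to_from s s' z : s \in x |: S -> s' \in x |: S ->
  z \in verts (path_to s) -> z \in verts (path_from (glue_target s')) -> s = s'.
Proof.
move=> sSx s'Sx zP zQ; have [PPs Pend] := path_toP sSx.
have [QQs Qhead] := path_fromP (glue_target_in s'Sx).
have [zP1 zQ1 zS] := Ps_Qs_meet PPs QQs zP zQ.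
move: Qhead; rewrite /glue_target -zQ1 zP1 Pend; case: eqP => // _ sy.
by move: y_notin_S; rewrite -sy -Pend -zP1 zS.
Qed.

Lemma glued_meet s s' z : s \in x |: S -> s' \in x |: S ->
  z \in verts (glued s) -> z \in verts (glued s') -> s = s'.
Proof.
move=> sSx s'Sx /mem_glued[zP|zQ] /mem_glued[zP'|zQ'].
- have [PPs Pend] := path_toP sSx; have [PPs' Pend'] := path_toP s'Sx.
  by rewrite -Pend -Pend' (uniq_flatten_map_inj disjPs PPs PPs' zP zP').
- exact: glued_meet_to_from zP zQ'.
- exact/esym/(glued_meet_to_from s'Sx sSx zP' zQ).
- have [QQs Qhead] := path_fromP (glue_target_in sSx).
  have [QQs' Qhead'] := path_fromP (glue_target_in s'Sx).
  apply: glue_target_inj => //.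
  by rewrite -Qhead -Qhead' (uniq_flatten_map_inj disjQs QQs QQs' zQ zQ').
Qed.

Lemma linkage_glued : linkage e A B k [seq glued s | s <- enum (x |: S)].
Proof.
split.
- by rewrite size_map -cardE (card_setU1_separator x_notin_S separates_Sx).
- by apply/allP => _ /mapP[s sSx ->]; apply: glued_AB_path; rewrite -mem_enum.
have glued_inj : {in enum (x |: S) &, injective glued}.
  move=> s s'; rewrite !mem_enum => sSx s'Sx E.
  by apply: (glued_meet (z := (glued s).1)) => //; rewrite ?E mem_head.
apply: uniq_flatten_mapI.
- by rewrite map_inj_in_uniq ?enum_uniq.
- by move=> _ /mapP[s sSx ->]; apply: glued_uniq; rewrite -mem_enum.
- move=> _ _ z /mapP[s sSx ->] /mapP[s' s'Sx ->] zs zs'.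
  by rewrite (glued_meet _ _ zs zs') // -mem_enum.
Qed.

End Glue.

Lemma menger_step : exists Ls, linkage e A B k Ls.
Proof.
have [Ps /tight_linkage[Ps' [sizePs tightPs disjPs]]] := linkage_to_Sx.
have [Qs /tight_linkage[Qs' [sizeQs tightQs disjQs]]] := linkage_from_Sy.
by exists [seq glued Ps' Qs' s | s <- enum (x |: S)]; apply: linkage_glued.
Qed.

End MengerStep.

Lemma menger_no_edges e A B k : (forall u v, ~~ e u v) ->
  (forall S, separates e A B S -> k <= #|S|) -> exists Ps, linkage e A B k Ps.
Proof.
move=> noE sep_e; have /sep_e leAB : separates e A B (A :&: B).
  move=> z [|v p] /=; last by rewrite (negbTE (noE z v)).
  by rewrite orbF inE => _ -> ->.
exists (take k [seq (z, [::]) | z <- enum (A :&: B)]); split.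
- by rewrite size_takel // size_map -cardE.
- apply/allP => P /mem_take/mapP[z]; rewrite mem_enum inE => /andP[zA zB] ->.
  by rewrite /AB_path /pend /= zA zB.
- rewrite /disjoint_paths -map_take -map_comp.
  by rewrite (@eq_map _ _ _ (fun z => [:: z])) // flatten_seq1 take_uniq ?enum_uniq.
Qed.

Theorem menger e A B k :
  (forall S, separates e A B S -> k <= #|S|) -> exists Ps, linkage e A B k Ps.
Proof.
have [n] := ubnP #|[set u : T * T | e u.1 u.2]|.
elim: n e A B => // n IHn e A B ltEn sep_e.
case: (pickP [pred u : T * T | e u.1 u.2]) => [[x y] /= exy|noE]; last first.
  by apply: menger_no_edges sep_e => u v; apply/negbT/(noE (u, v)).
have menger_e' A' B' : (forall S, separates (del_edge e x y) A' B' S -> k <= #|S|) ->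
    exists Ps, linkage (del_edge e x y) A' B' k Ps.
  apply: IHn; rewrite -ltnS (leq_trans _ ltEn) // ltnS; apply: proper_card; apply/properP.
  split; first by apply/subsetP => u; rewrite !inE => /andP[].
  by exists (x, y); rewrite !inE /= ?/del_edge /= ?eqxx ?andbF.
have [[S [sepS smallS]]|noS] :=
  classic (exists S, separates (del_edge e x y) A B S /\ #|S| < k).
  exact: menger_step exy menger_e' sep_e sepS smallS.
have [|Ps [sizePs ABPs disjPs]] := menger_e' A B.
  by move=> S sepS; rewrite leqNgt; apply/negP => smallS; apply: noS; exists S.
exists Ps; split => //; apply/allP => P /(allP ABPs) /and3P[pP PA PB].
by rewrite /AB_path (sub_path (@del_edge_sub _ _ _) pP) PA PB.
Qed.

End Menger.

(** * Arcs of cycles and even thetas *)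

Section Cycles.
Variables (T : finType) (e : rel T).
Hypothesis e_sym : symmetric e.
Implicit Types (C D R s : seq T).

(* The reversal of the path u :: R, as a path from last u R. *)
Definition revp u R := rev (belast u R).

Lemma revp_cons u R : last u R :: revp u R = rev (u :: R).
Proof. by rewrite /revp (lastI u R) rev_rcons. Qed.

Lemma size_revp u R : size (revp u R) = size R.
Proof. by rewrite size_rev size_belast. Qed.

Lemma last_revp u R : last (last u R) (revp u R) = u.
Proof.
have -> : last (last u R) (revp u R) = last u (last u R :: revp u R) by [].
by rewrite revp_cons rev_cons last_rcons.
Qed.

Lemma revp_rcons u R v : revp u (rcons R v) = rcons (rev R) u.
Proof. by rewrite /revp belast_rcons rev_cons. Qed.

Lemma interior_rcons R z : interior (rcons R z) = R.
Proof. by rewrite /interior size_rcons -cats1 take_size_cat. Qed.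

Lemma interior_revp u R : interior (revp u R) = rev (interior R).
Proof.
case/lastP: R => [|R v]; first by rewrite /interior.
by rewrite revp_rcons !interior_rcons.
Qed.

Definition arc_in C u v R := is_xy_path e u v R /\ {subset u :: R <= C}.

Lemma disjoint_seqP s1 s2 :
  reflect (forall z, z \in s1 -> z \in s2 -> False) [disjoint s1 & s2].
Proof.
apply: (iffP pred0P) => [dis z z1 z2|dis z /=]; first by move: (dis z); rewrite /= z1 z2.
by apply/negP => /andP[z1 z2]; apply: (dis z).
Qed.

Lemma disjoint_rev s1 s2 : [disjoint rev s1 & rev s2] = [disjoint s1 & s2].
Proof.
apply/disjoint_seqP/disjoint_seqP => dis z; rewrite ?mem_rev => z1 z2;
  by apply: (dis z); rewrite ?mem_rev.
Qed.

Lemma path_revp u R : path e u R -> path e (last u R) (revp u R).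
Proof. by rewrite rev_path; apply: sub_path => z z'; rewrite /= e_sym. Qed.

Lemma is_xy_path_revp u v R : is_xy_path e u v R -> is_xy_path e v u (revp u R).
Proof.
case/and3P=> pR /eqP <- uR; apply/and3P; split; first exact: path_revp.
  by rewrite last_revp.
by rewrite revp_cons rev_uniq.
Qed.

Lemma arc_in_revp C u v R : arc_in C u v R -> arc_in C v u (revp u R).
Proof.
case=> xyR subC; split; first exact: is_xy_path_revp.
by case/and3P: xyR => _ /eqP <- _ z; rewrite revp_cons mem_rev; apply: subC.
Qed.

Lemma cycle_split_arcs P u M v Q (C := P ++ u :: M ++ v :: Q) :
  uniq C -> cycle e C ->
  exists R1 R2, [/\ arc_in C u v R1, arc_in C u v R2,
    size R1 = (size M).+1, size R2 = (size Q + size P).+1 &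
    [disjoint interior R1 & interior R2]].
Proof.
have rotC : rot (size P) C = u :: M ++ v :: (Q ++ P) by rewrite /C rot_size_cat /= -catA.
have memC z : z \in u :: M ++ v :: (Q ++ P) -> z \in C by rewrite -rotC mem_rot.
rewrite -(rot_uniq (size P)) -(rot_cycle (size P)) rotC; set X := Q ++ P in memC *.
move=> uW; rewrite /= rcons_cat cat_path /= => /and3P[pM eMv pX].
have uuMv : uniq (u :: rcons M v).
  apply: subseq_uniq uW; rewrite /= eqxx -cats1.
  by apply: cat_subseq (subseq_refl M) _; rewrite sub1seq mem_head.
have uuvX : uniq (u :: v :: X).
  by apply: subseq_uniq uW; rewrite /= eqxx; apply: suffix_subseq.
have xyX : is_xy_path e v u (rcons X u).
  by rewrite /is_xy_path pX last_rcons eqxx -rcons_cons rcons_uniq.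
exists (rcons M v), (revp v (rcons X u)); split.
- split; first by rewrite /is_xy_path rcons_path pM eMv last_rcons eqxx.
  move=> z; rewrite -rcons_cons mem_rcons => zvuM; apply: memC.
  by move: zvuM; rewrite !(inE, mem_cat) => /or3P[->|->|->]; rewrite ?orbT.
- apply: arc_in_revp; split=> // z; rewrite -rcons_cons mem_rcons => zuvX; apply: memC.
  by move: zuvX; rewrite !(inE, mem_cat) => /or3P[->|->|->]; rewrite ?orbT.
- by rewrite size_rcons.
- by rewrite size_revp size_rcons size_cat.
- rewrite interior_revp !interior_rcons; apply/disjoint_seqP => z zM; rewrite mem_rev => zX.
  move: uW; rewrite /= cat_uniq => /andP[_ /and3P[_ /negP noMvX _]].
  by apply: noMvX; apply/hasP; exists z; rewrite ?inE ?zX ?orbT.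
Qed.

Lemma uniq_split2 C u v : uniq C -> u \in C -> v \in C -> index u C < index v C ->
  exists P M Q, [/\ C = P ++ u :: M ++ v :: Q, index u C = size P &
                     index v C = size P + (size M).+1].
Proof.
move=> uniqC uC vC; move: uniqC uC; case/splitPr: vC => C1 C2 uniqC uC.
have vC1 : v \notin C1.
  by move: uniqC; rewrite cat_uniq => /and3P[_ + _]; apply: contra => vC1; rewrite /= vC1.
rewrite !index_cat (negbTE vC1) /= eqxx addn0.
case: ifP => [uC1 _|]; last by rewrite ltnNge leq_addr.
move: uniqC; case/splitPr: uC1 => P M uniqC; exists P, M, C2; rewrite -catA.
have uP : u \notin P.
  by move: uniqC; rewrite -catA cat_uniq => /and3P[_ + _]; apply: contra => uP; rewrite /= uP.
by rewrite index_cat (negbTE uP) /= eqxx addn0 size_cat.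
Qed.

Lemma cycle_arcs C u v : uniq C -> cycle e C -> u \in C -> v \in C -> u != v ->
  exists R1 R2, [/\ arc_in C u v R1, arc_in C u v R2, size R1 + size R2 = size C,
    odd (size R1) = odd (index u C) (+) odd (index v C) &
    [disjoint interior R1 & interior R2]].
Proof.
move=> uniqC cycC; wlog lt_uv : u v / index u C < index v C.
  move=> ordered uC vC uv; case: (ltngtP (index u C) (index v C)) => [lt_uv|lt_vu|eq_uv].
  - exact: ordered.
  - have vu : v != u by rewrite eq_sym.
    have [R1 [R2 [a1 a2 sizeR parR disR]]] := ordered v u lt_vu vC uC vu.
    exists (revp v R1), (revp v R2); split; try exact: arc_in_revp.
    + by rewrite !size_revp.
    + by rewrite size_revp parR addbC.
    + by rewrite !interior_revp disjoint_rev.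
  - by move: uv; rewrite -(nth_index u uC) eq_uv nth_index ?eqxx.
move=> uC vC _; have [P [M [Q [EC -> ->]]]] := uniq_split2 uniqC uC vC lt_uv.
move: uniqC cycC; rewrite EC => uniqC cycC.
have [R1 [R2 [arc1 arc2 sizeR1 sizeR2 disR]]] := cycle_split_arcs uniqC cycC.
exists R1, R2; split=> //.
- by rewrite sizeR1 sizeR2 !size_cat /= size_cat /=; lia.
- by rewrite sizeR1 oddD addbA addbb.
Qed.

Lemma interior_belast y R : interior R = behead (belast y R).
Proof. by case/lastP: R => [|R v] //; rewrite interior_rcons belast_rcons. Qed.

Lemma mem_interior_cat s t : {subset interior (s ++ t) <= s ++ interior t}.
Proof.
case/lastP: t => [|t v] z; first by rewrite cats0 => /mem_take.
by rewrite -rcons_cat !interior_rcons.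
Qed.

Lemma odd_cycle_ear C D y1 p1 y2 p2 :
  uniq D -> cycle e D -> odd (size D) -> [disjoint C & D] ->
  tight_path e [set z in D] [set z in C] (y1, p1) ->
  tight_path e [set z in D] [set z in C] (y2, p2) ->
  uniq ((y1 :: p1) ++ (y2 :: p2)) ->
  exists E, [/\ is_xy_path e (last y1 p1) (last y2 p2) E, ~~ odd (size E) &
                [disjoint C & interior E]].
Proof.
move=> uniqD cycD odd_D disCD tight1 tight2.
rewrite cat_uniq => /and3P[uniq1 /hasPn dis12 uniq2'].
have uniq2 : uniq p2 by case/andP: uniq2'.
case/tight_pathP: tight1; rewrite /pend /= !inE => pp1 y1D x1C /hasPn nDp1 /hasPn nCp1.
case/tight_pathP: tight2; rewrite /pend /= !inE => pp2 y2D x2C /hasPn nDp2 /hasPn nCp2.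
have nD1 z : z \in p1 -> z \notin D by move/nDp1; rewrite /= inE.
have nD2 z : z \in p2 -> z \notin D by move/nDp2; rewrite /= inE.
have nC1 z : z \in belast y1 p1 -> z \notin C by move/nCp1; rewrite /= inE.
have nC2 z : z \in belast y2 p2 -> z \notin C by move/nCp2; rewrite /= inE.
have notCD z : z \in C -> z \in D -> False by apply/disjoint_seqP.
have y12 : y1 != y2 by apply: contraNneq (dis12 y2 (mem_head _ _)) => ->; apply: mem_head.
(* The two arcs of the odd cycle D between y1 and y2 have different parities. *)
have [R [[xyR subR] parR]] :
    exists R, arc_in D y1 y2 R /\ odd (size R) = odd (size p1 + size p2).
  have [R1 [R2 [arc1 arc2 sizeR _ _]]] := cycle_arcs uniqD cycD y1D y2D y12.
  case: (boolP (odd (size R1) == odd (size p1 + size p2))) => [/eqP par1|par1].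
    by exists R1.
  exists R2; split=> //; move: odd_D par1; rewrite -sizeR oddD.
  by case: (odd (size R1)); case: (odd (size R2)); case: odd.
case/and3P: xyR => pR /eqP lR uR.
have nR1 z : z \in R -> z \notin y1 :: p1.
  move=> zR; rewrite inE negb_or; apply/andP; split.
    by apply: contraTneq zR => ->; case/andP: uR.
  by apply/negP => /nD1/negP; apply; apply: subR; rewrite inE zR orbT.
exists (revp y1 p1 ++ R ++ p2); split.
- rewrite /is_xy_path cat_path last_revp cat_path pR lR pp2 last_cat last_revp last_cat lR eqxx.
  rewrite path_revp // -cat_cons revp_cons cat_uniq rev_uniq uniq1 cat_uniq uniq2.
  have uniqR : uniq R by case/andP: uR.
  rewrite uniqR /= andbT; apply/andP; split.
    apply/hasPn => z; rewrite mem_cat mem_rev => /orP[/nR1 //|zp2].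
    by apply: dis12; rewrite inE zp2 orbT.
  apply/hasPn => z zp2; apply/negP => zR.
  by move/negP: (nD2 z zp2); apply; apply: subR; rewrite inE zR orbT.
- by rewrite !size_cat size_revp addnCA oddD parR addbb.
- apply/disjoint_seqP => z zC /mem_interior_cat; rewrite mem_cat mem_rev.
  case/orP=> [/nC1|/mem_interior_cat]; first by rewrite zC.
  rewrite mem_cat => /orP[zR|].
    by case: (notCD z zC); apply: subR; rewrite inE zR orbT.
  by rewrite (interior_belast y2) => /mem_behead/nC2; rewrite zC.
Qed.

Lemma even_xy_pathE a0 a1 R : a0 != a1 -> is_xy_path e a0 a1 R -> ~~ odd (size R) ->
  R = head a0 R :: rcons (behead (interior R)) a1.
Proof.
move=> a01 /and3P[_ /eqP + _]; case: R => [/= a01'|b R]; first by rewrite a01' eqxx in a01.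
case/lastP: R => [|R l] //=; rewrite last_rcons => -> _.
by rewrite -rcons_cons interior_rcons.
Qed.

Lemma even_xy_path_split a0 a1 R (b := head a0 R) (m := behead (interior R)) :
  a0 != a1 -> is_xy_path e a0 a1 R -> ~~ odd (size R) ->
  [/\ interior R = b :: m, e a0 b,
      is_xy_path e a1 b (rcons (rev m) b) /\ odd (size (rcons (rev m) b)),
      a0 != b /\ a1 != b & [/\ a0 \notin m, a1 \notin m & b \notin m]].
Proof.
move=> a01 xyR evenR; have RE := even_xy_pathE a01 xyR evenR; rewrite -/b -/m in RE.
have xy_ba : is_xy_path e b a1 (rcons m a1).
  case/and3P: xyR; rewrite RE /= => /andP[_ pbm] _ /andP[_ ubm].
  by rewrite /is_xy_path pbm last_rcons eqxx.
case/and3P: xyR evenR; rewrite RE /= => /andP[eab _] _.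
rewrite !inE !mem_rcons !inE rcons_uniq !negb_or size_rcons /= negbK.
case/and4P=> /and3P[a0b _ a0m] /andP[ba1 bm] a1m _ evenm.
split=> //; first by rewrite -rcons_cons interior_rcons.
- by rewrite size_rcons size_rev -(revp_rcons _ _ a1) is_xy_path_revp.
- by split; rewrite // eq_sym.
Qed.

Lemma even_theta_K23_based a0 a1 (R : 'I_3 -> seq T) :
  a0 != a1 -> (forall j, is_xy_path e a0 a1 (R j) && ~~ odd (size (R j))) ->
  (forall j j', j != j' -> [disjoint interior (R j) & interior (R j')]) ->
  K23_based e.
Proof.
move=> a01 Rj disR; pose b j := head a0 (R j); pose m j := behead (interior (R j)).
have splitR j := even_xy_path_split a01 (andP (Rj j)).1 (andP (Rj j)).2.
have disbm j j' : j != j' -> forall z, z \in b j :: m j -> z \in b j' :: m j' -> False.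
  by move=> /disR; case: (splitR j) (splitR j') => -> _ _ _ _ [-> _ _ _ _] /disjoint_seqP.
exists (fun i : 'I_2 => if i == ord0 then a0 else a1), b,
  (fun i j => if i == ord0 then [:: b j] else rcons (rev (m j)) (b j)).
split.
- split=> [i i'|j j' bjj']; last first.
    apply/eqP/negPn/negP => /disbm/(_ (b j)); rewrite mem_head bjj' mem_head.
    by move=> /(_ isT isT).
  case: i i' => [[|[|//]] ?] [[|[|//]] ?] /= => [_|/eqP|/esym/eqP|_];
    by rewrite ?(negbTE a01) //; apply: val_inj.
- by move=> i j; case: (splitR j) => _ _ _ [a0b a1b] _; case: (i == ord0).
- move=> i j; case: (splitR j) => _ eab xyb _ _; case: (i == ord0) => //.
  by case: (splitR j) => _ _ _ [a0b _] _; rewrite /is_xy_path /= eab !inE eqxx a0b.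
- move=> i j; case: (i == ord0); first by split=> ?; rewrite /interior.
  rewrite interior_rcons; case: (splitR j) => _ _ _ _ [a0m a1m bm].
  split=> [k|l]; rewrite mem_rev; first by case: (k == ord0).
  have [<- //|jl] := eqVneq j l; apply/negP => blm.
  by apply: (disbm j l jl (b l)); rewrite inE ?blm ?eqxx ?orbT.
- move=> [[|[|//]] ?] j [[|[|//]] ?] j' /=; rewrite ?xpair_eqE /= => jj'; last first.
    rewrite !interior_rcons disjoint_rev; apply/disjoint_seqP => z zm zm'.
    by apply: (disbm j j' jj' z); rewrite inE ?zm ?zm' orbT.
  all: by apply/disjoint_seqP => z; rewrite /interior.
Qed.

Lemma two_connectors_K23_based C D y1 p1 y2 p2 :
  uniq C -> cycle e C -> ~~ odd (size C) ->
  uniq D -> cycle e D -> odd (size D) -> [disjoint C & D] ->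
  tight_path e [set z in D] [set z in C] (y1, p1) ->
  tight_path e [set z in D] [set z in C] (y2, p2) ->
  uniq ((y1 :: p1) ++ (y2 :: p2)) ->
  odd (index (last y1 p1) C) = odd (index (last y2 p2) C) ->
  K23_based e.
Proof.
move=> uniqC cycC even_C uniqD cycD odd_D disCD t1 t2 uniq12 par12.
have [E [xyE evenE disCE]] := odd_cycle_ear uniqD cycD odd_D disCD t1 t2 uniq12.
have [_ _ + _ _] := tight_pathP t1; have [_ _ + _ _] := tight_pathP t2.
rewrite /pend /= !inE => x2C x1C.
have x12 : last y1 p1 != last y2 p2.
  move: uniq12; rewrite cat_uniq => /and3P[_ /hasPn dis12 _].
  by apply: contraNneq (dis12 _ (mem_last y2 p2)) => <-; apply: mem_last.
have [R1 [R2 [[xyR1 subR1] [xyR2 subR2] sizeR parR1 disR]]] := cycle_arcs uniqC cycC x1C x2C x12.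
have int_sub R u : {subset u :: R <= C} -> interior R \subset C.
  by move=> subR; apply/subsetP => z /mem_take zR; apply: subR; rewrite inE zR orbT.
apply: (even_theta_K23_based x12 (R := fun j : 'I_3 => nth E [:: R1; R2] j)).
- have evenR1 : ~~ odd (size R1) by rewrite parR1 par12 addbb.
  move=> [[|[|[|//]]] ?] /=; rewrite ?xyR1 ?xyR2 ?xyE ?evenE ?evenR1 //.
  by move: even_C; rewrite -sizeR oddD (negbTE evenR1).
- move=> [[|[|[|//]]] ?] [[|[|[|//]]] ?] //= _;
    first [ exact: disR | rewrite disjoint_sym; exact: disR
          | apply: disjointWl disCE; first [exact: int_sub subR1 | exact: int_sub subR2]
          | rewrite disjoint_sym; apply: disjointWl disCE;
            first [exact: int_sub subR1 | exact: int_sub subR2] ].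
Qed.

End Cycles.

Lemma k_connected_separates (T : finType) (e : rel T) k (A B S : {set T}) :
  k_connected e k -> k <= #|A| -> k <= #|B| -> separates e A B S -> k <= #|S|.
Proof.
move=> [_ conn] kA kB sepS; rewrite leqNgt; apply/negP => ltSk.
have outside (X : {set T}) : k <= #|X| -> exists2 x, x \in X & x \notin S.
  move=> kX; apply/subsetPn/negP => /subset_leq_card.
  by rewrite leqNgt (leq_trans ltSk kX).
have [[a aA aS] [b bB bS]] := (outside A kA, outside B kB).
have /connectP[p + lp] := conn S ltSk a b aS bS.
rewrite del_rel_path // => /andP[pp nSp].
by move: (sepS a p pp aA); rewrite -lp bB /= (negbTE aS) (negbTE nSp) => /(_ isT).
Qed.

Lemma bool_pigeonhole (a b c : bool) : [\/ a = b, a = c | b = c].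
Proof. by case: a; case: b; case: c; first [exact: Or31 | exact: Or32 | exact: Or33]. Qed.

Theorem lemma3p3 (T : finType) (e : rel T) (e_sym : symmetric e)
  (e_irr : irreflexive e) :
  k_connected e 3 -> has_mixed_bicycle e -> K23_based e.
Proof.
move=> conn3 [Qo [Qe [/and3P[Qo3 uniqQo cycQo] /and3P[Qe3 uniqQe cycQe] oddQo [evenQe _] disQ]]].
have card_seq (s : seq T) : uniq s -> #|[set z in s]| = size s.
  by move=> uniq_s; rewrite cardsE (card_uniqP uniq_s).
have sep3 S : separates e [set z in Qo] [set z in Qe] S -> 3 <= #|S|.
  by apply: k_connected_separates conn3 _ _; rewrite card_seq.
have [_ /tight_linkage[Ps [size3 /allP tightPs disjPs]]] := menger sep3.
case: Ps size3 tightPs disjPs => [|[y1 p1] [|[y2 p2] [|[y3 p3] []]]] //= _ tightPs disjPs.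
have uniq123 : uniq ((y1 :: p1) ++ (y2 :: p2) ++ (y3 :: p3)).
  by move: disjPs; rewrite /disjoint_paths /= cats0.
have [t1 t2 t3] : [/\ tight_path e [set z in Qo] [set z in Qe] (y1, p1),
    tight_path e [set z in Qo] [set z in Qe] (y2, p2) &
    tight_path e [set z in Qo] [set z in Qe] (y3, p3)].
  by split; apply: tightPs; rewrite !inE eqxx ?orbT.
have disQ' : [disjoint Qe & Qo] by rewrite disjoint_sym.
have K23 := two_connectors_K23_based e_sym uniqQe cycQe evenQe uniqQo cycQo oddQo disQ'.
case: (bool_pigeonhole (odd (index (last y1 p1) Qe)) (odd (index (last y2 p2) Qe))
                       (odd (index (last y3 p3) Qe))).
- apply: K23 t1 t2 _; apply: subseq_uniq _ uniq123.
  by rewrite catA; apply: prefix_subseq.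
- apply: K23 t1 t3 _; apply: subseq_uniq _ uniq123.
  by apply: cat_subseq (subseq_refl _) (suffix_subseq _ _).
- by apply: K23 t2 t3 _; apply: subseq_uniq _ uniq123; apply: suffix_subseq.
Qed.
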